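(* Let $G$ be a simple graph with canonical mixed graph $F$ and let $X,Y$ be as defined in the context. Let $u,v\in X$ be distinct vertices with $uv\notin E(G)$. Then $cM_2(G+uv)\ge cM_2(G)$. Moreover, if $cM_2(G+uv)=cM_2(G)$, then $d_G(u)=d_G(v)$, $d^+_F(u)=d^-_F(u)$ and $d^+_F(v)=d^-_F(v)$.
   Context: All graphs are finite and simple; $d_G(u)$ is the degree of $u$ and $cM_2(G)=\sum_{uv\in E(G)}|d_G(u)^2-d_G(v)^2|$. $G+uv$ denotes $G$ with the edge $uv$ added. The canonical mixed graph $F$ of $G$ has vertex set $V(G)$; for each edge $uv\in E(G)$: if $d_G(u)>d_G(v)$ then $F$ contains the arc $\overrightarrow{uv}$, and if $d_G(u)=d_G(v)$ then $F$ contains the undirected edge $uv$. $d^+_F(u)$ (resp. $d^-_F(u)$) is the number of arcs of $F$ with tail (resp. head) $u$. $X=\{u\in V(G): d^+_F(u)\ge d^-_F(u)\}$ and $Y=\{u\in V(G): d^+_F(u)< d^-_F(u)\}$. *)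

From mathcomp Require Import all_boot all_order.
Set Implicit Arguments. Unset Strict Implicit. Unset Printing Implicit Defensive.

Definition simple_graph (T : finType) (e : rel T) : Prop :=
  symmetric e /\ irreflexive e.

Definition deg (T : finType) (e : rel T) (u : T) : nat := #|[set w | e u w]|.

Definition add_edge (T : finType) (e : rel T) (u v : T) : rel T :=
  fun x y => [|| e x y, (x == u) && (y == v) | (x == v) && (y == u)].

Definition absdiff (a b : nat) : nat := maxn a b - minn a b.

(* Each undirected edge
   appears twice among the ordered pairs (x,y) with e x y, and the summand is
   symmetric, so we halve the ordered sum (which is always even). *)
Definition cM2 (T : finType) (e : rel T) : nat :=
  (\sum_(x : T) \sum_(y : T | e x y) absdiff (deg e x ^ 2) (deg e y ^ 2)) %/ 2.

(* canonical mixed graph F: arc x->y iff xy in E(G) and d(x) > d(y). *)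
Definition outdegF (T : finType) (e : rel T) (u : T) : nat :=
  #|[set w | e u w && (deg e w < deg e u)]|.
Definition indegF (T : finType) (e : rel T) (u : T) : nat :=
  #|[set w | e u w && (deg e u < deg e w)]|.

Definition inX (T : finType) (e : rel T) (u : T) : bool :=
  indegF e u <= outdegF e u.

(* Adding uv raises d(u) and d(v) by one. For a neighbour y of u this moves
   |d(u)^2 - d(y)^2| by exactly 2 d(u) + 1: up if d(y) <= d(u), down if
   d(y) > d(u), i.e. down exactly along the in-arcs of u in F. Hence
   cM2(G + uv) - cM2(G) = (2 d(u) + 1)(l(u) - d^-(u)) + (2 d(v) + 1)(l(v) - d^-(v))
                          + |(d(u) + 1)^2 - (d(v) + 1)^2|,
   where l(w) counts the neighbours of w of degree at most d(w).
   For u, v in X we have d^-(w) <= d^+(w) <= l(w), so every term is nonnegative,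
   and equality forces each of them to vanish. *)

From mathcomp Require Import all_boot all_order zify.
Set Implicit Arguments. Unset Strict Implicit. Unset Printing Implicit Defensive.

Lemma absdiffC m n : absdiff m n = absdiff n m.
Proof. by rewrite /absdiff maxnC minnC. Qed.

Lemma absdiffnn n : absdiff n n = 0.
Proof. by rewrite /absdiff maxnn minnn subnn. Qed.

Lemma absdiff_eq0 m n : (absdiff m n == 0) = (m == n).
Proof. by rewrite /absdiff; apply/eqP/eqP; lia. Qed.

Lemma absdiff_sqS a z :
  absdiff (a.+1 ^ 2) (z ^ 2) + (a < z) * (2 * a + 1) =
  absdiff (a ^ 2) (z ^ 2) + (z <= a) * (2 * a + 1).
Proof. by rewrite /absdiff; case: leqP => h; nia. Qed.

Lemma sum_pred1_muln (T : finType) (w : T) (F : T -> nat) :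
  \sum_x (x == w) * F x = F w.
Proof.
rewrite (bigD1 w) //= eqxx mul1n big1 ?addn0 // => x /negbTE ->.
exact: mul0n.
Qed.

Lemma sum_nat_pred_const (T : finType) (P : pred T) k :
  \sum_x P x * k = #|[set x | P x]| * k.
Proof.
rewrite -sum_nat_const [RHS]big_mkcond /=.
by apply: eq_bigr => x _; rewrite inE; case: (P x); rewrite ?mul1n.
Qed.

Lemma big2_split (T : finType) (a b : T -> T -> nat) :
  \sum_x \sum_y (a x y + b x y) = \sum_x \sum_y a x y + \sum_x \sum_y b x y.
Proof. by rewrite -big_split; apply: eq_bigr => x _; apply: big_split. Qed.

Lemma eq_big2_addn (T : finType) (a b c d : T -> T -> nat) :
  (forall x y, a x y + b x y = c x y + d x y) ->
  \sum_x \sum_y a x y + \sum_x \sum_y b x y = \sum_x \sum_y c x y + \sum_x \sum_y d x y.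
Proof.
by move=> abcd; rewrite -!big2_split; apply: eq_bigr => x _; apply: eq_bigr => y _.
Qed.

(* The out-arcs plus the undirected edges of F at u. *)
Definition weak_outdegF (T : finType) (e : rel T) (u : T) : nat :=
  #|[set w | e u w && (deg e w <= deg e u)]|.

Lemma outdegF_le_weak (T : finType) (e : rel T) (u : T) :
  outdegF e u <= weak_outdegF e u.
Proof.
apply: subset_leq_card; apply/subsetP => w.
by rewrite !inE => /andP[-> /ltnW].
Qed.

Definition edge_cost (T : finType) (g : rel T) (x y : T) : nat :=
  g x y * absdiff (deg g x ^ 2) (deg g y ^ 2).

Lemma cM2E (T : finType) (g : rel T) :
  cM2 g = (\sum_x \sum_y edge_cost g x y) %/ 2.
Proof.
rewrite /cM2; congr (_ %/ _); apply: eq_bigr => x _; rewrite big_mkcond.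
by apply: eq_bigr => y _; rewrite /edge_cost; case: (g x y); rewrite ?mul1n.
Qed.

Lemma eq_deg (T : finType) (g g' : rel T) : g =2 g' -> deg g =1 deg g'.
Proof. by move=> eqg x; rewrite /deg; apply: eq_card => y; rewrite !inE eqg. Qed.

Lemma eq_edge_cost (T : finType) (g g' : rel T) :
  g =2 g' -> edge_cost g =2 edge_cost g'.
Proof. by move=> eqg x y; rewrite /edge_cost eqg !(eq_deg eqg). Qed.

Lemma edge_cost_diag (T : finType) (g : rel T) x : edge_cost g x x = 0.
Proof. by rewrite /edge_cost absdiffnn muln0. Qed.

Lemma edge_costC (T : finType) (g : rel T) :
  symmetric g -> edge_cost g =2 fun x y => edge_cost g y x.
Proof. by move=> gsym x y; rewrite /edge_cost gsym absdiffC. Qed.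

(* How the cost of the edge wy changes when d(w) alone grows by one. *)
Definition cost_rise (T : finType) (e : rel T) (w y : T) : nat :=
  (e w y && (deg e y <= deg e w)) * (2 * deg e w + 1).
Definition cost_drop (T : finType) (e : rel T) (w y : T) : nat :=
  (e w y && (deg e w < deg e y)) * (2 * deg e w + 1).

Section AddEdge.
Variables (T : finType) (e : rel T).
Hypotheses (e_sym : symmetric e) (e_irr : irreflexive e).

Lemma sum_cost_rise w : \sum_y cost_rise e w y = weak_outdegF e w * (2 * deg e w + 1).
Proof. exact: sum_nat_pred_const. Qed.

Lemma sum_cost_drop w : \sum_y cost_drop e w y = indegF e w * (2 * deg e w + 1).
Proof. exact: sum_nat_pred_const. Qed.

Lemma add_edgeC u v : add_edge e u v =2 add_edge e v u.
Proof. by move=> x y; rewrite /add_edge (orbC (_ && _)). Qed.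

Lemma add_edge_sym u v : symmetric (add_edge e u v).
Proof. by move=> x y; rewrite /add_edge e_sym (andbC (y == u)) (andbC (y == v)) (orbC (_ && _)). Qed.

Lemma add_edge_id u v x y : x != u -> x != v -> add_edge e u v x y = e x y.
Proof. by move=> /negbTE xu /negbTE xv; rewrite /add_edge xu xv orbF. Qed.

Lemma deg_add_edge u v x : x != u -> x != v -> deg (add_edge e u v) x = deg e x.
Proof. by move=> xu xv; apply: eq_card => y; rewrite !inE add_edge_id. Qed.

Lemma deg_add_edgeL u v : u != v -> ~~ e u v -> deg (add_edge e u v) u = (deg e u).+1.
Proof.
move=> /negbTE uv nuv; have := cardsU1 v [set w | e u w].
rewrite inE nuv add1n => <-.
by apply: eq_card => w; rewrite !inE /add_edge eqxx uv orbF orbC.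
Qed.

Lemma deg_add_edgeR u v : u != v -> ~~ e u v -> deg (add_edge e u v) v = (deg e v).+1.
Proof.
move=> uv nuv; rewrite (eq_deg (add_edgeC u v)) deg_add_edgeL //.
- by rewrite eq_sym.
- by rewrite e_sym.
Qed.

Lemma edge_cost_add_edgeL u v y : u != v -> ~~ e u v -> y != v ->
  edge_cost (add_edge e u v) u y + cost_drop e u y =
  edge_cost e u y + cost_rise e u y.
Proof.
move=> uv nuv yv; case: (eqVneq y u) => [->|yu].
  by rewrite !edge_cost_diag /cost_drop /cost_rise e_irr.
rewrite /edge_cost /cost_drop /cost_rise deg_add_edgeL // deg_add_edge //.
rewrite /add_edge eqxx (negbTE yv) (negbTE uv) orbF.
by case: (e u y); rewrite ?mul1n ?absdiff_sqS.
Qed.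

Lemma edge_cost_add_edgeR u v y : u != v -> ~~ e u v -> y != u ->
  edge_cost (add_edge e u v) v y + cost_drop e v y =
  edge_cost e v y + cost_rise e v y.
Proof.
move=> uv nuv yu; rewrite (eq_edge_cost (add_edgeC u v)).
by apply: edge_cost_add_edgeL yu; [rewrite eq_sym | rewrite e_sym].
Qed.

Section FixedEdge.
Variables u v : T.
Hypotheses (uv : u != v) (nuv : ~~ e u v).

Let e' := add_edge e u v.
Let N := absdiff ((deg e u).+1 ^ 2) ((deg e v).+1 ^ 2).

Definition at_ends (f : T -> T -> nat) (x y : T) : nat :=
  (x == u) * f u y + (x == v) * f v y.

Lemma sum_at_ends1 f : \sum_x \sum_y at_ends f x y = \sum_y f u y + \sum_y f v y.
Proof.
rewrite /at_ends; under eq_bigr => x _ do rewrite big_split /= -!big_distrr /=.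
by rewrite big_split /= (sum_pred1_muln u) (sum_pred1_muln v).
Qed.

Lemma sum_at_ends f :
  \sum_x \sum_y (at_ends f x y + at_ends f y x) = (\sum_y f u y + \sum_y f v y) * 2.
Proof. by rewrite big2_split [X in _ + X]exchange_big sum_at_ends1 addnn muln2. Qed.

Lemma edge_cost_add_edge x y :
  edge_cost e' x y + (at_ends (cost_drop e) x y + at_ends (cost_drop e) y x) =
  edge_cost e x y + (at_ends (cost_rise e) x y + at_ends (cost_rise e) y x +
  ((x == u) * (y == v) + (x == v) * (y == u)) * N).
Proof.
have vu : (v == u) = false by rewrite eq_sym (negbTE uv).
have euv : e u v = false by apply: negbTE.
have evu : e v u = false by rewrite e_sym.
have cost'_uv : edge_cost e' u v = N.
  by rewrite /edge_cost /e' deg_add_edgeL // deg_add_edgeR // /add_edge !eqxx orbT mul1n.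
have cost_uv : edge_cost e u v = 0 by rewrite /edge_cost euv.
rewrite /at_ends.
case: (eqVneq x u) => [->|xu]; [|case: (eqVneq x v) => [->|xv]];
  (case: (eqVneq y u) => [->|yu]; [|case: (eqVneq y v) => [->|yv]]);
  rewrite ?eqxx ?(negbTE uv) ?vu ?(negbTE xu) ?(negbTE xv) ?(negbTE yu) ?(negbTE yv)
          ?edge_cost_diag !(mul0n, mul1n, addn0, add0n).
- by rewrite /cost_drop /cost_rise e_irr.
- by rewrite cost'_uv cost_uv /cost_drop /cost_rise euv evu /= !mul0n !addn0 add0n.
- exact: edge_cost_add_edgeL.
- rewrite (edge_costC (add_edge_sym u v)) (edge_costC e_sym).
  by rewrite cost'_uv cost_uv /cost_drop /cost_rise euv evu /= !mul0n !addn0 add0n.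
- by rewrite /cost_drop /cost_rise e_irr.
- exact: edge_cost_add_edgeR.
- rewrite (edge_costC (add_edge_sym u v)) (edge_costC e_sym).
  exact: edge_cost_add_edgeL.
- rewrite (edge_costC (add_edge_sym u v)) (edge_costC e_sym).
  exact: edge_cost_add_edgeR.
- by rewrite /edge_cost /e' add_edge_id // !deg_add_edge.
Qed.

Lemma sum_edge_indicator :
  \sum_x \sum_y ((x == u) * (y == v) + (x == v) * (y == u)) * N = N * 2.
Proof.
under eq_bigr => x _ do under eq_bigr => y _ do rewrite mulnDl -!mulnA.
under eq_bigr => x _ do
  rewrite big_split /= -!big_distrr /= (sum_pred1_muln v) (sum_pred1_muln u).
by rewrite big_split /= (sum_pred1_muln u) (sum_pred1_muln v) muln2 addnn.
Qed.

Lemma cM2_add_edge :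
  cM2 e' + (indegF e u * (2 * deg e u + 1) + indegF e v * (2 * deg e v + 1)) =
  cM2 e + (weak_outdegF e u * (2 * deg e u + 1) + weak_outdegF e v * (2 * deg e v + 1) + N).
Proof.
have := eq_big2_addn edge_cost_add_edge.
rewrite sum_at_ends big2_split sum_at_ends sum_edge_indicator -mulnDl.
rewrite !sum_cost_drop !sum_cost_rise => /(congr1 (fun n => n %/ 2)).
by rewrite ![_ + _ * 2]addnC !divnMDl // -!cM2E addnC [RHS]addnC.
Qed.

End FixedEdge.
End AddEdge.

Theorem mainTheorem3 (T : finType) (e : rel T) (u v : T) :
  simple_graph e -> inX e u -> inX e v -> u != v -> ~~ e u v ->
  cM2 e <= cM2 (add_edge e u v) /\
  (cM2 (add_edge e u v) = cM2 e ->
     [/\ deg e u = deg e v, outdegF e u = indegF e u & outdegF e v = indegF e v]).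
Proof.
move=> [e_sym e_irr]; rewrite /inX => Xu Xv uv nuv.
have := cM2_add_edge e_sym e_irr uv nuv.
set A := 2 * deg e u + 1; set B := 2 * deg e v + 1.
have le_u := outdegF_le_weak e u; have le_v := outdegF_le_weak e v.
have le_uA : indegF e u * A <= weak_outdegF e u * A by rewrite leq_mul2r; lia.
have le_vB : indegF e v * B <= weak_outdegF e v * B by rewrite leq_mul2r; lia.
move=> cM2_eq; split=> [|cM2_eq']; first by lia.
have /eqP eq_u : indegF e u == weak_outdegF e u.
  by rewrite -(eqn_pmul2r (_ : 0 < A)) ?addn1 //; apply/eqP; lia.
have /eqP eq_v : indegF e v == weak_outdegF e v.
  by rewrite -(eqn_pmul2r (_ : 0 < B)) ?addn1 //; apply/eqP; lia.
have /eqP : absdiff ((deg e u).+1 ^ 2) ((deg e v).+1 ^ 2) = 0 by lia.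
rewrite absdiff_eq0 eqn_exp2r // eqSS => /eqP eq_deg_uv.
by split=> //; lia.
Qed.
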